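(* Let $\gamma>0$, $k,L>0$, $(g,o)$ a rooted graph and $\varepsilon>0$. For $N$ large enough, $$\mathbb{P}_{N,\gamma}\Big(\Big|\frac{\#\{i\in[N]:B^L_{(G_N,i)}(k)\simeq(g,o)\}}{N}-\mu^L_\gamma(k,(g,o))\Big|>\varepsilon\Big)<2\exp\Big\{-\frac{\varepsilon^2N}{8kL+2}\Big\},$$ where $\mu^L_\gamma(k,(g,o))=\mathbb{P}_\gamma\big(B^L_{(G,0)}(k)\simeq(g,o)\big)$.
   Context: Graphs are locally finite with vertex set in $\mathbb{Z}$; $d_g$ is graph distance; the length of an edge $\{i,j\}$ is $|i-j|$. $\mathbb{P}_{N,\gamma}$ is the law of the random graph $G_N$ on $[N]=\{1,\dots,N\}$ containing all edges $\{x,x+1\}$ and each other pair $\{x,y\}$ independently with probability $\exp\{-|x-y|^\gamma\}$; $\mathbb{P}_\gamma$ is the analogous law of a random graph $G$ on vertex set $\mathbb{Z}$. A rooted graph is $(g,o)$ with $o$ a vertex of $g$; $(g,o)\simeq(g',o')$ if the translation $x\mapsto x-o+o'$ maps $g$ exactly onto $g'$. $B_{(g,o)}(k)$ is the subgraph of $g$ induced on $\{x:d_g(o,x)\le k\}$, rooted at $o$; the truncated ball $B^L_{(g,o)}(k)$ is $B_{(g',o)}(k)$ where $g'$ is $g$ with all edges of length larger than $L$ removed. *)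

From HB Require Import structures.
From mathcomp Require Import all_boot all_order all_algebra.
From mathcomp Require Import all_classical all_reals all_analysis.
Set Implicit Arguments. Unset Strict Implicit. Unset Printing Implicit Defensive.
Import Order.TTheory GRing.Theory Num.Theory.
Local Open Scope classical_set_scope.
Local Open Scope ring_scope.

Record zgraph := ZGraph { gV : set int ; gE : int -> int -> Prop }.

Definition is_graph (g : zgraph) : Prop :=
  (forall x y, gE g x y -> [/\ gV g x, gV g y, x <> y & gE g y x]) /\
  (forall x, finite_set [set y | gE g x y]).

(** [dist_le g o n x] <-> d_g(o,x) <= n  (o must be a vertex of g). *)
Fixpoint dist_le (g : zgraph) (o : int) (n : nat) (x : int) : Prop :=
  match n with
  | 0 => x = o /\ gV g o
  | n'.+1 => dist_le g o n' x \/ exists y, dist_le g o n' y /\ gE g y x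
  end.

Definition ball (g : zgraph) (o : int) (k : nat) : zgraph :=
  ZGraph (dist_le g o k) (fun x y => [/\ gE g x y, dist_le g o k x & dist_le g o k y]).

Definition truncate (L : nat) (g : zgraph) : zgraph :=
  ZGraph (gV g) (fun x y => gE g x y /\ (`|x - y| <= L%:Z)%R).

Definition tball (L : nat) (g : zgraph) (o : int) (k : nat) : zgraph :=
  ball (truncate L g) o k.

Definition rooted_iso (g : zgraph) (o : int) (g' : zgraph) (o' : int) : Prop :=
  (forall x, gV g x <-> gV g' (x - o + o')) /\
  (forall x y, gE g x y <-> gE g' (x - o + o') (y - o + o')).

Definition pconn {R : realType} (gamma : R) (m : nat) : R :=
  expR (- ((m%:R : R) `^ gamma)).

(* Vertex a : 'I_N stands for the integer a+1.  The random pairs are the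
   (a,b) with a + 1 < b; an outcome is a set E of such pairs (those present). *)
Definition cand (N : nat) : {set 'I_N * 'I_N} :=
  [set e : 'I_N * 'I_N | ((e.1 : nat).+1 < e.2)%N].

Definition GN (N : nat) (E : {set 'I_N * 'I_N}) : zgraph :=
  ZGraph [set x : int | (1 <= x <= N%:Z)%R]
    (fun x y => [/\ (1 <= x <= N%:Z)%R, (1 <= y <= N%:Z)%R &
       (`|x - y| = 1%:Z \/
        exists e, e \in E /\
          ((x = (e.1 : nat).+1%:Z /\ y = (e.2 : nat).+1%:Z) \/
           (y = (e.1 : nat).+1%:Z /\ x = (e.2 : nat).+1%:Z)))]).

Definition weightN {R : realType} (gamma : R) (N : nat) (E : {set 'I_N * 'I_N}) : R :=
  (\prod_(e in E) pconn gamma (e.2 - e.1)) *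
  (\prod_(e in cand N :\: E) (1 - pconn gamma (e.2 - e.1))).

Definition PN {R : realType} (gamma : R) (N : nat) (A : zgraph -> Prop) : R :=
  \sum_(E : {set 'I_N * 'I_N} | (E \subset cand N) && `[< A (GN E) >]) weightN gamma E.

Definition count_balls (N L k : nat) (G : zgraph) (g : zgraph) (o : int) : nat :=
  #|[set i : 'I_N | `[< rooted_iso (tball L G (i : nat).+1%:Z k) (i : nat).+1%:Z g o >]]|.

(* A probability space (Omega, P) with, for each pair x < y of integers, an
   indicator xi x y of the presence of the edge {x,y}.  The law P_gamma is
   characterised by: the events are measurable and, for every finite family
   of distinct pairs x < y with y - x >= 2, the probability that all of them
   are present is the product of the exp{-|x-y|^gamma}
   (i.e. independent Bernoulli(exp{-|x-y|^gamma}) edges). *)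
Definition is_Pgamma {R : realType} (gamma : R) {d : measure_display}
    {Omega : measurableType d} (P : probability Omega R)
    (xi : int -> int -> Omega -> bool) : Prop :=
  (forall x y, measurable [set w | xi x y w]) /\
  (forall s : seq (int * int), uniq s -> all (fun e => (e.1 + 1 < e.2)%R) s ->
     P (\bigcap_(e in [set` s]) [set w | xi e.1 e.2 w]) =
     (\prod_(e <- s) pconn gamma `|e.2 - e.1|%N)%:E).

Definition Gz {d : measure_display} {Omega : measurableType d}
    (xi : int -> int -> Omega -> bool) (w : Omega) : zgraph :=
  ZGraph setT (fun x y => `|x - y| = 1%:Z \/
                          ((x + 1 < y)%R /\ xi x y w) \/ ((y + 1 < x)%R /\ xi y x w)).

(* Split [[N]] into the [m = 2kL + 1] residue classes modulo [m].  The truncated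
   [k]-ball of [i] only depends on the pairs with both ends within [kL] of [i], so
   inside one residue class these windows are disjoint and the indicators
   [Y_i = 1{B^L(i, k) ~= (g, o)}] are independent.  Hoeffding's exponential bound
   for each class (with [lambda = eps / 2]) and a union bound over the [m] classes
   give the tail estimate.  Away from the [2kL] vertices near the ends of [[N]],
   the window of [i] has the law of the window of [0] in the infinite graph, so
   [E Y_i = mu]; the remaining vertices shift the count by at most [2kL].  For [N]
   large the factor [m] and this boundary error are absorbed into the exponent. *)

From HB Require Import structures.
From mathcomp Require Import all_boot all_order all_algebra.
From mathcomp Require Import all_classical all_reals all_analysis.
From mathcomp Require Import ring lra zify.
Set Implicit Arguments. Unset Strict Implicit. Unset Printing Implicit Defensive.
Import Order.TTheory GRing.Theory Num.Theory.
Local Open Scope ring_scope.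

Ltac mem_tauto x :=
  repeat match goal with |- context [x \in ?A] => case: (x \in A) end;
  repeat (simpl; match goal with
  | |- (is_true true -> _) -> _ => move=> /(_ isT)
  | |- (is_true false -> _) -> _ => move=> _
  | |- is_true true -> _ => move=> _
  | |- is_true false -> _ => by []
  end); by [].

Section BernoulliExpectation.
Variables (R : realFieldType) (T : finType) (p : T -> R).
Implicit Types (S A B E F G : {set T}) (f g : {set T} -> R).

Definition bern_weight S E : R :=
  \prod_(e in E) p e * \prod_(e in S :\: E) (1 - p e).

Definition bern_expect S f : R :=
  \sum_(E : {set T} | E \subset S) bern_weight S E * f E.

Definition depends_on S A f := forall E, E \subset S -> f E = f (E :&: A).

Lemma prod_setU_disjoint F G (u : T -> R) : [disjoint F & G] ->
  \prod_(e in F :|: G) u e = \prod_(e in F) u e * \prod_(e in G) u e.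
Proof. by move=> dFG; rewrite -bigU //; apply: eq_bigl => x; rewrite !inE. Qed.

Lemma bern_weightU S A F G : A \subset S -> F \subset A -> G \subset S :\: A ->
  bern_weight S (F :|: G) = bern_weight A F * bern_weight (S :\: A) G.
Proof.
move=> /fintype.subsetP hAS /fintype.subsetP hF /fintype.subsetP hG; rewrite /bern_weight.
have dFG : [disjoint F & G].
  rewrite -setI_eq0; apply/eqP/setP => x.
  by move: (hAS x) (hF x) (hG x); rewrite !inE; mem_tauto x.
have dD : [disjoint A :\: F & (S :\: A) :\: G].
  by rewrite -setI_eq0; apply/eqP/setP => x; rewrite !inE; mem_tauto x.
have -> : S :\: (F :|: G) = (A :\: F) :|: ((S :\: A) :\: G).
  by apply/setP => x; move: (hAS x) (hF x) (hG x); rewrite !inE; mem_tauto x.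
by rewrite !prod_setU_disjoint // mulrACA.
Qed.

Lemma eq_bern_expect S f g : (forall E, E \subset S -> f E = g E) ->
  bern_expect S f = bern_expect S g.
Proof. by move=> efg; apply: eq_bigr => E hE; rewrite efg. Qed.

(* Condition on the trace [F = E :&: A] of the outcome [E]. *)
Lemma bern_expect_split S A f : A \subset S ->
  bern_expect S f = bern_expect A (fun F => bern_expect (S :\: A) (fun G => f (F :|: G))).
Proof.
move=> hAS; rewrite /bern_expect.
rewrite (partition_big (fun E => E :&: A) (fun F => F \subset A)) /=; last first.
  by move=> E _; rewrite subsetIr.
apply: eq_bigr => F hF; rewrite big_distrr /=.
move/fintype.subsetP: hAS => hAS'; move/fintype.subsetP: (hF) => hF'.
rewrite (reindex_onto (fun G => F :|: G) (fun E => E :\: A)) /=; last first.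
  move=> E /andP[/fintype.subsetP hE /eqP hEA]; apply/setP => x; rewrite -hEA.
  by move: (hE x); rewrite !inE; mem_tauto x.
apply: eq_big => G.
  apply/idP/idP.
    case/andP => [/andP [/fintype.subsetP h1 _] /eqP <-].
    by apply/fintype.subsetP => x; move: (h1 x); rewrite !inE; mem_tauto x.
  move/fintype.subsetP => hG; rewrite -andbA; apply/and3P.
  split; [apply/fintype.subsetP => x | apply/eqP/setP => x | apply/eqP/setP => x];
    by move: (hAS' x) (hF' x) (hG x); rewrite !inE; mem_tauto x.
case/andP => [/andP [/fintype.subsetP h1 _] /eqP h3].
rewrite (@bern_weightU S A) ?mulrA //; first by apply/fintype.subsetP.
by rewrite -h3; apply/fintype.subsetP => x; move: (h1 x); rewrite !inE; mem_tauto x.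
Qed.

Lemma bern_expect_set0 f : bern_expect finset.set0 f = f finset.set0.
Proof.
rewrite /bern_expect (big_pred1 finset.set0); last by move=> E; rewrite finset.subset0.
by rewrite /bern_weight !big_set0 finset.setD0 big_set0 !mul1r.
Qed.

Lemma bern_expect_set1 e f :
  bern_expect [set e] f = p e * f [set e] + (1 - p e) * f finset.set0.
Proof.
rewrite /bern_expect (bigD1 [set e]) ?subxx //=; congr (_ + _).
  by rewrite /bern_weight finset.setDv big_set0 big_set1 mulr1.
rewrite (big_pred1 finset.set0); last first.
  move=> E /=; rewrite subset1; case: (E =P [set e]) => [->|_] /=; last by rewrite andbT.
  by apply/esym/eqP => /setP /(_ e); rewrite !inE eqxx.
by rewrite /bern_weight big_set0 finset.setD0 big_set1 mul1r.
Qed.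

Lemma bern_expectD S f g :
  bern_expect S (fun E => f E + g E) = bern_expect S f + bern_expect S g.
Proof. by rewrite /bern_expect -big_split; apply: eq_bigr => E _; rewrite mulrDr. Qed.

Lemma bern_expectZ S c f : bern_expect S (fun E => c * f E) = c * bern_expect S f.
Proof. by rewrite /bern_expect big_distrr; apply: eq_bigr => E _; rewrite mulrCA. Qed.

Lemma bern_expect_sum (J : finType) S (u : J -> {set T} -> R) :
  bern_expect S (fun E => \sum_(j : J) u j E) = \sum_(j : J) bern_expect S (u j).
Proof. by rewrite /bern_expect; under eq_bigr do rewrite mulr_sumr; exact: exchange_big. Qed.

Lemma bern_expect1 S : bern_expect S (fun _ => 1) = 1.
Proof.
elim: {S}_.+1 {-2}S (ltnSn #|S|) => // n IHn S; rewrite ltnS => hS.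
have [->|[e Se]] := set_0Vmem S; first by rewrite bern_expect_set0.
have eS : [set e] \subset S by rewrite finset.sub1set.
rewrite (bern_expect_split _ eS) IHn; first by rewrite bern_expect_set1 !mulr1 addrC subrK.
by move: hS; rewrite (cardsD1 e S) Se add1n.
Qed.

Lemma bern_expect_cst S c : bern_expect S (fun _ => c) = c.
Proof.
by rewrite -[RHS]mulr1 -(bern_expect1 S) -bern_expectZ; apply: eq_bern_expect => E _; rewrite mulr1.
Qed.

Lemma bern_expect_setU1 S e f : e \notin S ->
  bern_expect (e |: S) f = p e * bern_expect S (fun G => f (e |: G)) + (1 - p e) * bern_expect S f.
Proof.
move=> eS; have e1 : [set e] \subset e |: S by rewrite finset.sub1set setU11.
rewrite (bern_expect_split _ e1) bern_expect_set1.
have -> : (e |: S) :\: [set e] = S.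
  by apply/setP => x; rewrite !inE; case: (x =P e) => [->|] //=; rewrite (negbTE eS).
by congr (_ + _ * _); apply: eq_bern_expect => G _; rewrite finset.set0U.
Qed.

Lemma bern_expect_restrict S A f : A \subset S -> depends_on S A f ->
  bern_expect S f = bern_expect A f.
Proof.
move=> hAS fA; rewrite (bern_expect_split _ hAS); apply: eq_bern_expect => F hF.
rewrite -[RHS](bern_expect_cst (S :\: A)); apply: eq_bern_expect => G hG.
rewrite fA; last first.
  by rewrite finset.subUset (fintype.subset_trans hF hAS) (fintype.subset_trans hG (subsetDl _ _)).
congr f; apply/setP => x; move/fintype.subsetP: hF => /(_ x); move/fintype.subsetP: hG => /(_ x).
by rewrite !inE; mem_tauto x.
Qed.

Lemma bern_expectM_indep S A B f g : A \subset S -> [disjoint A & B] ->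
  depends_on S A f -> depends_on S B g ->
  bern_expect S (fun E => f E * g E) = bern_expect S f * bern_expect S g.
Proof.
move=> hAS dAB fA gB.
have gD : depends_on S (S :\: A) g.
  move=> E hE; rewrite gB // [RHS]gB; last by rewrite finset.subIset ?hE.
  congr g; apply/setP => x; move/fintype.subsetP: hE => /(_ x).
  by move: (disjointFr dAB (x := x)); rewrite !inE; mem_tauto x.
have hU F G : F \subset A -> G \subset S :\: A ->
    [/\ F :|: G \subset S, (F :|: G) :&: A = F & (F :|: G) :&: (S :\: A) = G].
  move=> /fintype.subsetP hF /fintype.subsetP hG; move/fintype.subsetP: hAS => hAS'.
  split; [apply/fintype.subsetP => x | apply/setP => x | apply/setP => x];
    by move: (hAS' x) (hF x) (hG x); rewrite !inE; mem_tauto x.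
rewrite [bern_expect S g](bern_expect_restrict (subsetDl _ _) gD).
rewrite (bern_expect_restrict hAS fA) (bern_expect_split _ hAS) [RHS]mulrC -bern_expectZ.
apply: eq_bern_expect => F hF; rewrite [RHS]mulrC -bern_expectZ.
apply: eq_bern_expect => G hG; have [sFG FGA FGD] := hU F G hF hG.
by rewrite fA // gD // FGA FGD.
Qed.

Lemma bern_expect_prod_indep (I : eqType) (s : seq I) (W : I -> {set T})
    (u : I -> {set T} -> R) S :
  uniq s -> (forall i, i \in s -> W i \subset S) ->
  (forall i, i \in s -> depends_on S (W i) (u i)) ->
  {in s &, forall i j, i != j -> [disjoint W i & W j]} ->
  bern_expect S (fun E => \prod_(i <- s) u i E) = \prod_(i <- s) bern_expect S (u i).
Proof.
elim: s => [|i s IHs] /=.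
  move=> *; rewrite big_nil -[RHS](bern_expect_cst S).
  by apply: eq_bern_expect => E _; rewrite big_nil.
case/andP => i_notin us hW hu hdis.
have sub_s j : j \in s -> j \in i :: s by rewrite in_cons => ->; rewrite orbT.
rewrite big_cons -IHs //; first last.
- by move=> a b sa sb; exact: hdis (sub_s a sa) (sub_s b sb).
- by move=> j js; exact: hu (sub_s j js).
- by move=> j js; exact: hW (sub_s j js).
pose Ws := [set x | has (fun j => x \in W j) s].
rewrite (eq_bern_expect (g := fun E => u i E * \prod_(j <- s) u j E)); last first.
  by move=> E _; rewrite big_cons.
have dWs : [disjoint W i & Ws].
  rewrite -setI_eq0; apply/eqP/setP => x; rewrite !inE.
  apply/negbTE/negP => /andP [xWi /hasP [j js xWj]].
  have ij : i != j by apply: contraNneq i_notin => ->.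
  by move: (disjointFr (hdis i j (mem_head _ _) (sub_s j js) ij) xWi); rewrite xWj.
have dep_s : depends_on S Ws (fun E => \prod_(j <- s) u j E).
  move=> E hE; rewrite big_seq_cond [RHS]big_seq_cond; apply: eq_bigr => j /andP[hj _].
  have uj : depends_on S (W j) (u j) by exact: hu (sub_s j hj).
  rewrite (uj E hE) (uj (E :&: Ws)); last by apply: fintype.subset_trans hE; exact: subsetIl.
  congr (u j); apply/setP => x; rewrite !inE.
  case xWj: (x \in W j); rewrite ?andbF ?andbT //.
  by rewrite (_ : has _ _ = true) ?andbT //; apply/hasP; exists j.
exact: bern_expectM_indep (hW i (mem_head i s)) dWs (hu i (mem_head i s)) dep_s.
Qed.

Hypothesis p01 : forall e, 0 <= p e <= 1.

Lemma bern_weight_ge0 S E : 0 <= bern_weight S E.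
Proof.
rewrite /bern_weight mulr_ge0 //; apply: prodr_ge0 => e _; case/andP: (p01 e) => // _.
by rewrite subr_ge0.
Qed.

Lemma ler_bern_expect S f g : (forall E, E \subset S -> f E <= g E) ->
  bern_expect S f <= bern_expect S g.
Proof. by move=> fg; apply: ler_sum => E hE; rewrite ler_wpM2l ?bern_weight_ge0 ?fg. Qed.

Lemma bern_expect_indicator01 S (Y : {set T} -> bool) :
  0 <= bern_expect S (fun E => (Y E)%:R) <= 1.
Proof.
apply/andP; split.
  by apply: sumr_ge0 => E _; rewrite mulr_ge0 ?bern_weight_ge0.
by rewrite -[X in _ <= X](bern_expect1 S); apply: ler_bern_expect => E _; case: (Y E).
Qed.
End BernoulliExpectation.

Lemma expR_le_quad (R : realType) (x : R) : `|x| <= 1 / 2 -> expR x <= 1 + x + 2 * x ^+ 2.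
Proof.
move=> hx; have := hx; rewrite ler_norml => /andP[xge xle].
have h1 : 1 - x <= expR (- x) := expR_ge1Dx (- x).
have h2 : expR x * (1 - x) <= 1.
  have e : expR x * expR (- x) = 1 by rewrite -expRD subrr expR0.
  by rewrite -[X in _ <= X]e ler_wpM2l ?expR_ge0.
have := expR_gt0 x; nra.
Qed.

Lemma bern_expect_centered_mgf (R : realType) (T : finType) (p : T -> R)
    (S : {set T}) (Y : {set T} -> bool) (l : R) :
  (forall e, 0 <= p e <= 1) -> `|l| <= 1 / 2 ->
  bern_expect p S (fun E => expR (l * ((Y E)%:R - bern_expect p S (fun E => (Y E)%:R))))
  <= expR (l ^+ 2 / 2).
Proof.
move=> p01 hl; set q := bern_expect p S (fun E => (Y E)%:R).
have /andP [q0 q1] : 0 <= q <= 1 by exact: (bern_expect_indicator01 p01).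
have /andP [lge lle] : - (1 / 2) <= l <= 1 / 2 by rewrite -ler_norml.
(* On [{0, 1}], [y |-> expR (l * (y - q))] lies below the affine map [a + b * y],
   whose mean [a + b * q] is at most [1 + l ^+ 2 / 2]. *)
pose a := 1 - l * q + 2 * l ^+ 2 * q ^+ 2.
pose b := l + 2 * l ^+ 2 * (1 - 2 * q).
have affine y : (y = 0 \/ y = 1) -> expR (l * (y - q)) <= a + b * y.
  move=> hy; apply: le_trans (expR_le_quad _) _.
    by rewrite ler_norml; case: hy => ->; apply/andP; split; nra.
  by rewrite /a /b; case: hy => ->; nra.
apply: (@le_trans _ _ (bern_expect p S (fun E => a + b * (Y E)%:R))).
  by apply: ler_bern_expect => // E _; apply: affine; case: (Y E); [right|left].
rewrite bern_expectD bern_expect_cst bern_expectZ -/q.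
have := expR_ge1Dx (l ^+ 2 / 2); have := sqr_ge0 (l * (2 * q - 1)).
rewrite /a /b; nra.
Qed.

Lemma rooted_iso_sym (A B : zgraph) (a b : int) : rooted_iso A a B b -> rooted_iso B b A a.
Proof.
have e z : z - b + a - a + b = z by ring.
by case=> hV hE; split => [x|x y]; rewrite ?hV ?hE !e.
Qed.

Lemma rooted_iso_trans (A B C : zgraph) (a b c : int) :
  rooted_iso A a B b -> rooted_iso B b C c -> rooted_iso A a C c.
Proof.
have e z : z - a + b - b + c = z - a + c by ring.
by case=> hAV hAE [hBV hBE]; split => [x|x y]; rewrite ?hAV ?hBV ?hAE ?hBE !e.
Qed.

Lemma dist_le_truncate_norm (G : zgraph) (L n : nat) (o x : int) :
  dist_le (truncate L G) o n x -> `|x - o| <= (n * L)%:Z.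
Proof.
elim: n x => [|n IHn] x /=; first by case=> -> _; rewrite subrr.
case=> [/IHn|[y [/IHn hy [_ hyx]]]]; lia.
Qed.

Definition agree_near (r L : nat) (G1 : zgraph) (c1 : int) (G2 : zgraph) (c2 : int) :=
  (gV G1 c1 <-> gV G2 c2) /\
  forall x y, `|x - c1| <= r%:Z -> `|y - c1| <= r%:Z -> `|x - y| <= L%:Z ->
    (gE G1 x y <-> gE G2 (x - c1 + c2) (y - c1 + c2)).

Lemma agree_near_sym r L G1 c1 G2 c2 : agree_near r L G1 c1 G2 c2 -> agree_near r L G2 c2 G1 c1.
Proof.
case=> hV hE; split=> [|x y hx hy hxy]; first by split=> /hV.
have e z : z - c2 + c1 - c1 + c2 = z by ring.
have := hE (x - c2 + c1) (y - c2 + c1); rewrite !e => h.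
by apply: iff_sym; apply: h; lia.
Qed.

Lemma dist_le_truncate_agree k L G1 c1 G2 c2 n x : agree_near (k * L) L G1 c1 G2 c2 ->
  (n <= k)%N -> dist_le (truncate L G1) c1 n x -> dist_le (truncate L G2) c2 n (x - c1 + c2).
Proof.
case=> hV hE; elim: n x => [|n IHn] x hn /=.
  by case=> -> /hV; split; first rewrite subrr add0r.
have nkL : (n.+1 * L <= k * L)%N by rewrite leq_mul2r hn orbT.
case=> [h|[y [hy [hyx hl]]]]; first by left; apply: IHn => //; lia.
right; exists (y - c1 + c2); split; first by apply: IHn => //; lia.
have ny := dist_le_truncate_norm hy.
split; last by rewrite (_ : y - c1 + c2 - (x - c1 + c2) = y - x) //; ring.
apply/hE => //; lia.
Qed.

Lemma tball_iso_of_agree k L G1 c1 G2 c2 : agree_near (k * L) L G1 c1 G2 c2 ->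
  rooted_iso (tball L G1 c1 k) c1 (tball L G2 c2 k) c2.
Proof.
move=> agr; set d1 := dist_le (truncate L G1) c1 k; set d2 := dist_le (truncate L G2) c2 k.
have d21 x : d2 (x - c1 + c2) -> d1 x.
  move/(dist_le_truncate_agree (agree_near_sym agr) (leqnn k)).
  by rewrite (_ : x - c1 + c2 - c2 + c1 = x) //; ring.
have d12 x : d1 x <-> d2 (x - c1 + c2).
  by split=> [|/d21 //]; exact: dist_le_truncate_agree agr (leqnn k).
have near x : d2 (x - c1 + c2) -> `|x - c1| <= (k * L)%:Z.
  by move/d21/dist_le_truncate_norm.
split=> [x|x y] /=; first exact: d12.
have exy : x - c1 + c2 - (y - c1 + c2) = x - y by ring.
case: (agr) => _ hE; split=> -[[e xy] dx dy].
  have [dx2 dy2] := (proj1 (d12 x) dx, proj1 (d12 y) dy).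
  by split=> //; split; [apply/hE => //; exact: near | rewrite exy].
have xyL : `|x - y| <= L%:Z by rewrite -exy.
by split; [split=> //; exact: (hE x y (near x dx) (near y dy) xyL).2 | exact: d21 | exact: d21].
Qed.

Section IndependentEvents.
Local Open Scope classical_set_scope.
Variables (R : realType) (d : measure_display) (Omega : measurableType d)
  (P : probability Omega R) (T : finType) (ev : T -> Omega -> bool) (p : T -> R) (W : {set T}).
Hypothesis ev_meas : forall e, measurable [set w | ev e w].
Hypothesis ev_indep : forall s : seq T, uniq s -> all (mem W) s ->
  P [set w | all (ev ^~ w) s] = (\prod_(e <- s) p e)%:E.

Definition cylinder (s t : seq T) : set Omega :=
  [set w | all (ev ^~ w) s && all (fun e => ~~ ev e w) t].

Lemma cylinder_consl e s t : cylinder (e :: s) t = [set w | ev e w] `&` cylinder s t.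
Proof. by apply/seteqP; split => w /=; rewrite /cylinder /= -andbA; [case/andP | case=> -> ->]. Qed.

Lemma cylinder_consr e s t : cylinder s (e :: t) = ~` [set w | ev e w] `&` cylinder s t.
Proof.
apply/seteqP; split => w /=; rewrite /cylinder /=.
  by case: (ev e w); rewrite ?andbF //= andbT.
by case: (ev e w) => [[]|] //= [_ ->].
Qed.

Lemma measurable_cylinder s t : measurable (cylinder s t).
Proof.
elim: s => [|e s IHs]; last by rewrite cylinder_consl; exact: measurableI.
elim: t => [|e t IHt]; first by rewrite (_ : cylinder _ _ = setT) //; apply/seteqP.
by rewrite cylinder_consr; apply: measurableI => //; exact: measurableC.
Qed.

(* The product rule is only assumed for occurrences; absences are added one at a
   time through [P C = P (C, e absent) + P (C, e present)]. *)
Lemma prob_cylinder s t : uniq (s ++ t) -> all (mem W) (s ++ t) ->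
  P (cylinder s t) = (\prod_(e <- s) p e * \prod_(e <- t) (1 - p e))%:E.
Proof.
elim: t s => [|e t IHt] s; rewrite ?cats0 => st_uniq st_W.
  rewrite big_nil mulr1 -ev_indep //; apply: congr1.
  by apply/seteqP; split => w; rewrite /cylinder /= andbT.
have perm_e : perm_eq (s ++ e :: t) (e :: s ++ t) by rewrite -cat1s perm_catCA.
move: st_uniq st_W; rewrite (perm_uniq perm_e) (perm_all _ perm_e) => est_uniq est_W.
move: (est_uniq) (est_W) => /andP[_ st_uniq] /andP[_ st_W].
have split_e : P (cylinder s t) = (P (cylinder s (e :: t)) + P (cylinder (e :: s) t))%E.
  rewrite cylinder_consr cylinder_consl setIC [_ `&` cylinder s t]setIC -setDE.
  by apply: measureDI; [exact: measurable_cylinder | exact: ev_meas].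
have fin_e : P (cylinder s (e :: t)) = (fine (P (cylinder s (e :: t))))%:E.
  by rewrite fineK // fin_num_measure //; exact: measurable_cylinder.
rewrite (IHt s) // (IHt (e :: s)) // fin_e -EFinD in split_e.
have split_eq := EFin_inj split_e.
rewrite fin_e; congr EFin; apply: (addIr (\prod_(e <- e :: s) p e * \prod_(e <- t) (1 - p e))).
by rewrite -split_eq !big_cons; ring.
Qed.

Definition config (u : seq T) (w : Omega) : {set T} := [set x | (x \in u) && ev x w].

Lemma config_nil_event (Phi : {set T} -> bool) :
  [set w | Phi (config [::] w)] = if Phi finset.set0 then setT else set0.
Proof.
have -> : config [::] = fun=> finset.set0 by apply/funext => w; apply/setP => x; rewrite !inE.
by case: (Phi finset.set0); apply/seteqP; split=> w.
Qed.

Lemma config_cons e u w : config (e :: u) w = if ev e w then e |: config u w else config u w.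
Proof.
by apply/setP => x; case: ifP => he; rewrite !inE; case: (x =P e) => [->|] /=; rewrite ?he ?andbF.
Qed.

Lemma config_cons_setI e u (Phi : {set T} -> bool) s t :
  [set w | Phi (config (e :: u) w)] `&` cylinder s t `&` [set w | ev e w] =
  [set w | Phi (e |: config u w)] `&` cylinder (e :: s) t.
Proof.
rewrite cylinder_consl; apply/seteqP; split => w /=; rewrite config_cons.
  by case=> [[h1 h2] h3]; rewrite h3 in h1.
by case=> h1 [h3 h2]; rewrite h3.
Qed.

Lemma config_cons_setD e u (Phi : {set T} -> bool) s t :
  [set w | Phi (config (e :: u) w)] `&` cylinder s t `\` [set w | ev e w] =
  [set w | Phi (config u w)] `&` cylinder s (e :: t).
Proof.
rewrite cylinder_consr; apply/seteqP; split => w /=; rewrite config_cons.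
  by case=> [[h1 h2] h3]; rewrite (negbTE (introN idP h3)) in h1.
by case=> h1 [h3 h2]; rewrite (negbTE (introN idP h3)).
Qed.

Lemma measurable_config_cylinder u (Phi : {set T} -> bool) s t :
  measurable ([set w | Phi (config u w)] `&` cylinder s t).
Proof.
elim: u Phi s t => [|e u IHu] Phi s t.
  by rewrite config_nil_event; case: (Phi _); rewrite ?setTI ?set0I //; exact: measurable_cylinder.
rewrite -(setUIDK (_ `&` cylinder s t) [set w | ev e w]) config_cons_setI config_cons_setD.
by apply: measurableU; [exact: (IHu (fun F => Phi (e |: F))) | exact: IHu].
Qed.

Lemma prob_config_cylinder u (Phi : {set T} -> bool) s t :
  uniq (u ++ s ++ t) -> all (mem W) (u ++ s ++ t) ->
  P ([set w | Phi (config u w)] `&` cylinder s t) =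
  (\prod_(e <- s) p e * \prod_(e <- t) (1 - p e) *
   bern_expect p [set x in u] (fun F => (Phi F)%:R))%:E.
Proof.
elim: u Phi s t => [|e u IHu] Phi s t ust_uniq ust_W.
  rewrite config_nil_event (_ : [set x in [::]] = finset.set0); last first.
    by apply/setP => x; rewrite !inE.
  rewrite bern_expect_set0; case: (Phi _); rewrite ?setTI ?set0I ?mulr1 ?mulr0 ?measure0 //.
  exact: prob_cylinder.
have perm_s : perm_eq ((e :: u) ++ s ++ t) (u ++ (e :: s) ++ t).
  by rewrite perm_sym /= -cat1s perm_catCA.
have perm_t : perm_eq ((e :: u) ++ s ++ t) (u ++ s ++ (e :: t)).
  by rewrite perm_sym /= !catA -cat1s perm_catCA.
have [s_uniq s_W] : uniq (u ++ (e :: s) ++ t) /\ all (mem W) (u ++ (e :: s) ++ t).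
  by rewrite -(perm_uniq perm_s) -(perm_all _ perm_s).
have [t_uniq t_W] : uniq (u ++ s ++ (e :: t)) /\ all (mem W) (u ++ s ++ (e :: t)).
  by rewrite -(perm_uniq perm_t) -(perm_all _ perm_t).
have split_e : P ([set w | Phi (config (e :: u) w)] `&` cylinder s t) =
  (P ([set w | Phi (config u w)] `&` cylinder s (e :: t)) +
   P ([set w | Phi (e |: config u w)] `&` cylinder (e :: s) t))%E.
  rewrite -config_cons_setI -config_cons_setD; apply: measureDI => //.
  exact: measurable_config_cylinder.
rewrite split_e (IHu (fun F => Phi (e |: F))) // IHu // -EFinD; congr EFin.
have e_notin : e \notin u by move: ust_uniq; rewrite /= mem_cat negb_or => /andP[/andP[]].
rewrite (_ : [set x in e :: u] = e |: [set x in u]); last by apply/setP => x; rewrite !inE.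
by rewrite bern_expect_setU1 ?inE // !big_cons; ring.
Qed.

Lemma prob_config_bern_expect (Phi : {set T} -> bool) :
  P [set w | Phi [set x in W | ev x w]] = (bern_expect p W (fun F => (Phi F)%:R))%:E.
Proof.
have := @prob_config_cylinder (enum W) Phi [::] [::].
rewrite !cats0 enum_uniq (_ : all (mem W) (enum W)); last by apply/allP => x; rewrite mem_enum.
rewrite !big_nil !mul1r (_ : [set x in enum W] = W); last by apply/setP => x; rewrite inE mem_enum.
rewrite (_ : cylinder [::] [::] = setT) ?setIT; last by apply/seteqP.
rewrite (_ : config (enum W) = fun w => [set x in W | ev x w]) => [<- //|].
by apply/funext => w; apply/setP => x; rewrite !inE mem_enum.
Qed.
End IndependentEvents.

Lemma rooted_iso_iff (A B g : zgraph) (a b o : int) :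
  rooted_iso A a B b -> rooted_iso A a g o <-> rooted_iso B b g o.
Proof.
by move=> AB; split=> [|/(rooted_iso_trans AB) //]; exact/rooted_iso_trans/rooted_iso_sym.
Qed.

Lemma ord_of_int_between N (x : int) : 1 <= x <= N%:Z -> exists a : 'I_N, x = (a : nat).+1%:Z.
Proof.
move=> /andP[x1 xN]; have xlt : (`|x - 1|%N < N)%N by lia.
by exists (Ordinal xlt) => /=; lia.
Qed.

Section Windows.
Variables (N k L : nat).
Local Notation K := (k * L)%N.

(* The pairs that can influence the truncated [k]-ball of [i]. *)
Definition window (i : 'I_N) : {set 'I_N * 'I_N} :=
  [set e in cand N | [&& (i <= e.1 + K)%N, (e.1 <= i + K)%N, (i <= e.2 + K)%N & (e.2 <= i + K)%N]].

Definition ball_match (g : zgraph) (o : int) (i : 'I_N) (E : {set 'I_N * 'I_N}) : bool :=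
  `[< rooted_iso (tball L (GN E) (i : nat).+1%:Z k) (i : nat).+1%:Z g o >].

Lemma window_sub_cand i : window i \subset cand N.
Proof. by apply/fintype.subsetP => e; rewrite inE => /andP[]. Qed.

Lemma ball_match_window g o i (E : {set 'I_N * 'I_N}) : E \subset cand N ->
  ball_match g o i E = ball_match g o i (E :&: window i).
Proof.
move=> E_cand; apply: asbool_equiv_eq; apply: rooted_iso_iff; apply: tball_iso_of_agree.
split=> // x y hx hy hxy; rewrite !subrK /=.
split; case=> x1N y1N [xy1|[e [eE exy]]]; split=> //; [by left | right | by left | right].
  exists e; split => //; rewrite inE eE /= inE (fintype.subsetP E_cand _ eE) /=.
  by case: exy => [[ex ey]|[ey ex]]; apply/and4P; split; lia.
by exists e; split => //; move: eE; rewrite inE => /andP[].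
Qed.
End Windows.

Section ShiftedEdges.
Variables (N k L : nat) (d : measure_display) (Omega : measurableType d).
Variable xi : int -> int -> Omega -> bool.
Local Notation K := (k * L)%N.

(* Couples [G_N] with [G] recentred at vertex [i + 1]: the pair [(a, b)], i.e. the
   integers [a + 1] and [b + 1], is present iff [{a - i, b - i}] is an edge of [G]. *)
Definition shifted_edge (i : 'I_N) (e : 'I_N * 'I_N) (w : Omega) : bool :=
  xi ((e.1 : nat)%:Z - (i : nat)%:Z) ((e.2 : nat)%:Z - (i : nat)%:Z) w.

Lemma agree_near_GN_Gz (i : 'I_N) w : (K <= i)%N -> (i + K < N)%N ->
  agree_near K L (GN [set e in window k L i | shifted_edge i e w]) (i : nat).+1%:Z (Gz xi w) 0.
Proof.
move=> iK iKN; split=> [|x y hx hy hxy] /=; first by split=> // _; lia.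
rewrite !addr0; set c := (i : nat).+1%:Z.
have x1N : 1 <= x <= N%:Z by apply/andP; split; lia.
have y1N : 1 <= y <= N%:Z by apply/andP; split; lia.
have shift (a : 'I_N) z : z = (a : nat).+1%:Z -> z - c = (a : nat)%:Z - (i : nat)%:Z by lia.
split.
  case=> _ _ [xy1|[e [eF exy]]]; first by left; lia.
  move: eF; rewrite !inE /shifted_edge => /andP[/andP[e_cand /and4P[b1 b2 b3 b4]] ev_e].
  by case: exy => [[ex ey]|[ey ex]]; right; [left|right];
    rewrite (shift _ _ ex) (shift _ _ ey); split=> //; lia.
have [a xa] := ord_of_int_between x1N; have [b yb] := ord_of_int_between y1N.
have inF (u v : 'I_N) : (u : nat).+1%:Z + 1 < (v : nat).+1%:Z -> `|(u : nat).+1%:Z - c| <= K%:Z ->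
    `|(v : nat).+1%:Z - c| <= K%:Z -> xi ((u : nat).+1%:Z - c) ((v : nat).+1%:Z - c) w ->
    (u, v) \in [set e in window k L i | shifted_edge i e w].
  move=> uv hu hv ev_uv; rewrite !inE /= /shifted_edge /=.
  rewrite -(shift u _ erefl) -(shift v _ erefl) ev_uv andbT; apply/and4P; split; lia.
case=> [xy1|[[xy ev_xy]|[yx ev_yx]]]; split=> //; first by left; lia.
  by right; exists (a, b); split; [apply: inF; rewrite -?xa -?yb //; lia | left].
by right; exists (b, a); split; [apply: inF; rewrite -?xa -?yb //; lia | right].
Qed.

Lemma ball_match_Gz g o (i : 'I_N) w : (K <= i)%N -> (i + K < N)%N ->
  ball_match k L g o i [set e in window k L i | shifted_edge i e w] <->
  rooted_iso (tball L (Gz xi w) 0 k) 0 g o.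
Proof.
move=> iK iKN; rewrite /ball_match asboolE.
by apply/rooted_iso_iff/tball_iso_of_agree/agree_near_GN_Gz.
Qed.
End ShiftedEdges.

Section FiniteModel.
Variables (R : realType) (gamma : R) (N : nat).

Definition pedge (e : 'I_N * 'I_N) : R := pconn gamma (e.2 - e.1)%N.

Lemma pedge01 e : 0 <= pedge e <= 1.
Proof. by rewrite /pedge /pconn expR_ge0 expR_le1 oppr_le0 powR_ge0. Qed.

Lemma PN_bern_expect (A : zgraph -> Prop) :
  PN gamma N A = bern_expect pedge (cand N) (fun E => `[< A (GN E) >]%:R).
Proof.
rewrite /PN /bern_expect big_mkcondr /=; apply: eq_bigr => E _.
by case: `[< A (GN E) >]; rewrite ?mulr1 ?mulr0.
Qed.
End FiniteModel.


Section InfiniteModel.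
Local Open Scope classical_set_scope.
Variables (R : realType) (gamma : R) (d : measure_display) (Omega : measurableType d).
Variables (P : probability Omega R) (xi : int -> int -> Omega -> bool).
Hypothesis Pg : is_Pgamma gamma P xi.

Lemma prob_shifted_edges (N : nat) (i : 'I_N) (s : seq ('I_N * 'I_N)) :
  uniq s -> all (mem (cand N)) s ->
  P [set w | all (shifted_edge xi i ^~ w) s] = (\prod_(e <- s) pedge gamma e)%:E.
Proof.
move=> s_uniq s_cand; have e_cand e : e \in s -> ((e.1 : nat).+1 < e.2)%N.
  by move=> es; move: (allP s_cand e es); rewrite /= inE.
pose tau (e : 'I_N * 'I_N) : int * int :=
  ((e.1 : nat)%:Z - (i : nat)%:Z, (e.2 : nat)%:Z - (i : nat)%:Z).
have tau_inj : injective tau.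
  by move=> [a b] [a' b'] /= [h1 h2]; congr pair; apply: val_inj => /=; lia.
have tau_s : all (fun e : int * int => (e.1 + 1 < e.2)%R) (map tau s).
  apply/allP => _ /mapP[e es ->]; have := e_cand e es => e12.
  (* restated over the canonical instances of [int], which [lia] recognises *)
  by suff : ((e.1 : nat)%:Z - (i : nat)%:Z + 1 < (e.2 : nat)%:Z - (i : nat)%:Z)%R by []; lia.
have -> : [set w | all (shifted_edge xi i ^~ w) s] =
    \bigcap_(e in [set` map tau s]) [set w | xi e.1 e.2 w].
  apply/seteqP; split=> w /= h; first by move=> _ /mapP[e es ->]; exact: (allP h e es).
  by apply/allP => e es; exact: h (tau e) (map_f tau es).
rewrite Pg.2 ?(map_inj_uniq tau_inj) // big_map; congr EFin.
apply: eq_big_seq => e es; rewrite /pedge; congr pconn; have := e_cand e es => e12.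
by suff : absz ((e.2 : nat)%:Z - (i : nat)%:Z - ((e.1 : nat)%:Z - (i : nat)%:Z))%R = (e.2 - e.1)%N
  by []; lia.
Qed.

Lemma ball_prob_interior (k L : nat) (g : zgraph) (o : int) (N : nat) (i : 'I_N) :
  (k * L <= i)%N -> (i + k * L < N)%N ->
  P [set w | rooted_iso (tball L (Gz xi w) 0 k) 0 g o] =
  (bern_expect (@pedge _ gamma N) (cand N) (fun E => (ball_match k L g o i E)%:R))%:E.
Proof.
move=> iK iKN.
have -> : [set w | rooted_iso (tball L (Gz xi w) 0 k) 0 g o] =
    [set w | ball_match k L g o i [set e in window k L i | shifted_edge xi i e w]].
  by apply/seteqP; split=> w /= /(ball_match_Gz xi g o w iK iKN).
have window_indep s : uniq s -> all (mem (window k L i)) s ->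
    P [set w | all (shifted_edge xi i ^~ w) s] = (\prod_(e <- s) pedge gamma e)%:E.
  move=> s_uniq s_W; apply: prob_shifted_edges => //.
  by apply/allP => e /(allP s_W); exact: (fintype.subsetP (window_sub_cand k L i)).
rewrite (prob_config_bern_expect (fun e => Pg.1 _ _) window_indep).
congr EFin; symmetry; apply: bern_expect_restrict; first exact: window_sub_cand.
by move=> E E_cand; rewrite -ball_match_window.
Qed.
End InfiniteModel.

Lemma sum_ord_ltn K n : (\sum_(i < n) (i < K : nat) = minn n K)%N.
Proof.
elim: n => [|n IHn]; first by rewrite big_ord0 min0n.
by rewrite big_ord_recr /= IHn; case: (ltnP n K) => h /=; lia.
Qed.

Lemma sum_ord_leq_addn K N n : (\sum_(i < n) (N <= i + K : nat) = n - (N - K))%N.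
Proof.
elim: n => [|n IHn]; first by rewrite big_ord0; lia.
by rewrite big_ord_recr /= IHn; case: (leqP N (n + K)) => h /=; lia.
Qed.

Lemma sum_boundary_le N K : (\sum_(i < N) (~~ ((K <= i) && (i + K < N)) : nat) <= 2 * K)%N.
Proof.
apply: (@leq_trans (\sum_(i < N) ((i < K : nat) + (N <= i + K : nat)))).
  by apply: leq_sum => i _; case: (leqP K i) => h1; case: (ltnP (i + K) N) => h2.
rewrite big_split /= sum_ord_ltn sum_ord_leq_addn; lia.
Qed.

Lemma expR_two_sided_ge1 (R : realType) (z s l : R) : 0 <= l -> s < `|z| ->
  1 <= expR (l * z - l * s) + expR (- l * z - l * s).
Proof.
move=> l0 sz; have one_le (x : R) : 0 <= x -> 1 <= expR x by move=> x0; have := expR_ge1Dx x; lra.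
case: (lerP 0 z) => z0; [rewrite ger0_norm // in sz | rewrite ltr0_norm // in sz].
  by have := one_le (l * z - l * s) ltac:(nra); have := expR_ge0 (- l * z - l * s); lra.
by have := one_le (- l * z - l * s) ltac:(nra); have := expR_ge0 (l * z - l * s); lra.
Qed.

Section ResidueClasses.
Variables (R : realType) (gamma : R) (N k L : nat) (g : zgraph) (o : int).
Local Notation K := (k * L)%N.
Local Notation m := (2 * K).+1.
Local Notation expect := (bern_expect (@pedge R gamma N) (cand N)).

Definition residue (i : 'I_N) : 'I_m := Ordinal (ltn_pmod i (ltn0Sn (2 * K))).

Definition ball_mean (i : 'I_N) : R := expect (fun E => (ball_match k L g o i E)%:R).

Definition class_dev (r : 'I_m) (E : {set 'I_N * 'I_N}) : R :=
  \sum_(i | residue i == r) ((ball_match k L g o i E)%:R - ball_mean i).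

Lemma window_disjoint_residue i j : residue i = residue j -> i != j ->
  [disjoint window k L i & window k L j].
Proof.
move=> /(congr1 val) /= ij_mod ij.
have far (a b : nat) : (a %% m = b %% m)%N -> (a < b)%N -> (m <= b - a)%N.
  move=> ab_mod ab; apply: dvdn_leq; first by lia.
  by rewrite -eqn_mod_dvd ?ab_mod //; lia.
have {}far : (m <= j - i)%N \/ (m <= i - j)%N.
  case: (ltngtP i j) => h; [left; exact: far | right; exact: far |].
  by move: ij; rewrite (val_inj h) eqxx.
rewrite -setI_eq0; apply/eqP/setP => e; rewrite !inE.
by apply/negbTE/negP => /andP[/andP[_ /and4P[a1 a2 _ _]] /andP[_ /and4P[b1 b2 _ _]]]; lia.
Qed.

Lemma size_residue_class r :
  (size [seq i <- index_enum 'I_N | residue i == r] <= (N %/ m).+1)%N.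
Proof.
set s := [seq i <- _ | _].
have s_uniq : uniq s by apply: filter_uniq; exact: index_enum_uniq.
have quot_inj : {in s &, injective (fun i : 'I_N => (i %/ m)%N)}.
  move=> i j; rewrite !mem_filter => /andP[/eqP ri _] /andP[/eqP rj _] /= ij_quot.
  apply: val_inj; rewrite /= (divn_eq i m) (divn_eq j m) ij_quot.
  by move: ri rj => <- /(congr1 val) /= ->.
rewrite -(size_map (fun i : 'I_N => (i %/ m)%N)) -(size_iota 0 (N %/ m).+1).
apply: uniq_leq_size; first by rewrite map_inj_in_uniq.
move=> _ /mapP[i _ ->]; rewrite mem_iota /= add0n ltnS.
by apply: leq_div2r; exact: ltnW.
Qed.

(* Within a residue class the windows are disjoint, so the summands are independent. *)
Lemma class_dev_mgf r l : `|l| <= 1 / 2 ->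
  expect (fun E => expR (l * class_dev r E)) <= expR (l ^+ 2 / 2 * (N %/ m).+1%:R).
Proof.
move=> hl; set s := [seq i <- index_enum 'I_N | residue i == r].
rewrite (@eq_bern_expect _ _ _ _ _
  (fun E => \prod_(i <- s) expR (l * ((ball_match k L g o i E)%:R - ball_mean i)))); last first.
  by move=> E _; rewrite /class_dev mulr_sumr expR_sum big_filter.
rewrite (@bern_expect_prod_indep _ _ _ _ _ (window k L)); first last.
- move=> i j; rewrite !mem_filter => /andP[/eqP ri _] /andP[/eqP rj _] ij.
  by apply: window_disjoint_residue => //; rewrite ri rj.
- by move=> i _ E E_cand; rewrite ball_match_window.
- by move=> i _; exact: window_sub_cand.
- by apply: filter_uniq; exact: index_enum_uniq.
apply: (@le_trans _ _ (\prod_(i <- s) expR (l ^+ 2 / 2))).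
  apply: ler_prod => i _; apply/andP; split.
    by apply: sumr_ge0 => E _; rewrite mulr_ge0 ?expR_ge0 ?bern_weight_ge0 //; exact: pedge01.
  exact: bern_expect_centered_mgf (@pedge01 _ gamma N) hl.
rewrite -expR_sum big_const_seq count_predT iter_addr_0 ler_expR mulr_natr.
by apply: ler_wpMn2l; [rewrite divr_ge0 ?sqr_ge0 | exact: size_residue_class].
Qed.

Variable mu : R.
Local Notation count E := (count_balls N L k (GN E) g o).
Hypothesis interior_mean : forall i : 'I_N, (K <= i)%N -> (i + K < N)%N -> ball_mean i = mu.
Hypothesis mu01 : 0 <= mu <= 1.

Lemma count_balls_sum E : (count E)%:R = \sum_(i : 'I_N) (ball_match k L g o i E)%:R :> R.
Proof.
rewrite /count_balls -sum1_card natr_sum big_mkcond /=; apply: eq_bigr => i _.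
case: (boolP (ball_match k L g o i E)) => h; first by rewrite mem_set.
by case: ifP => // /set_mem /= hi; move: h; rewrite /ball_match hi.
Qed.

Lemma boundary_mean_dev : `|\sum_(i : 'I_N) (ball_mean i - mu)| <= 2 * K%:R.
Proof.
apply: le_trans (ler_norm_sum _ _ _) _.
apply: (@le_trans _ _ (\sum_(i : 'I_N) ((~~ ((K <= i)%N && (i + K < N)%N) : nat)%:R))).
  apply: ler_sum => i _; case: (boolP (_ && _)) => [/andP[iK iKN]|_].
    by rewrite interior_mean // subrr normr0.
  have /andP[q0 q1] := bern_expect_indicator01 (@pedge01 _ gamma N) (cand N) (ball_match k L g o i).
  by case/andP: mu01 => mu0 mu1; rewrite /= ler_norml; apply/andP; split; rewrite /ball_mean; lra.
by rewrite -natr_sum -natrM ler_nat sum_boundary_le.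
Qed.

Lemma count_dev_class_dev E eps : (0 < N)%N ->
  eps < `|(count E)%:R / N%:R - mu| ->
  exists r : 'I_m, (N%:R * eps - 2 * K%:R) / m%:R < `|class_dev r E|.
Proof.
move=> N0 dev; have N0r : 0 < N%:R :> R by rewrite ltr0n.
have split_dev : (count E)%:R - N%:R * mu =
    \sum_(r : 'I_m) class_dev r E + \sum_(i : 'I_N) (ball_mean i - mu).
  have -> : \sum_(r : 'I_m) class_dev r E =
      \sum_(i : 'I_N) ((ball_match k L g o i E)%:R - ball_mean i).
    by rewrite (partition_big residue xpredT).
  rewrite -big_split /=.
  under eq_bigr do rewrite addrA subrK.
  by rewrite sumrB count_balls_sum sumr_const card_ord mulr_natl.
have big_dev : N%:R * eps < `|(count E)%:R - N%:R * mu|.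
  rewrite (_ : _ - _ = ((count E)%:R / N%:R - mu) * N%:R); last by field; rewrite lt0r_neq0.
  by rewrite normrM (gtr0_norm N0r) [N%:R * eps]mulrC ltr_pM2r.
apply/not_existsP => small; move: big_dev; apply/negP; rewrite -leNgt.
have {}small r : `|class_dev r E| <= (N%:R * eps - 2 * K%:R) / m%:R by rewrite leNgt; exact/negP.
have m0 : 0 < m%:R :> R by rewrite ltr0n.
have sum_small : `|\sum_(r : 'I_m) class_dev r E| <= N%:R * eps - 2 * K%:R.
  apply: le_trans (ler_norm_sum _ _ _) _; apply: le_trans (ler_sum _ (fun r _ => small r)) _.
  by rewrite sumr_const card_ord -(mulr_natr ((N%:R * eps - 2 * K%:R) / m%:R)) divfK ?lt0r_neq0.
rewrite split_dev; apply: le_trans (ler_normD _ _) _.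
by have := boundary_mean_dev; lra.
Qed.

Lemma class_tail_le r l s : 0 <= l -> l <= 1 / 2 ->
  expect (fun E => expR (l * class_dev r E - l * s) + expR (- l * class_dev r E - l * s))
  <= 2 * (expR (- (l * s)) * expR (l ^+ 2 / 2 * (N %/ m).+1%:R)).
Proof.
move=> l0 l_le.
have shift l' : expect (fun E => expR (l' * class_dev r E - l * s)) =
    expR (- (l * s)) * expect (fun E => expR (l' * class_dev r E)).
  by rewrite -bern_expectZ; apply: eq_bern_expect => E _; rewrite -expRD addrC.
rewrite bern_expectD (shift l) (shift (- l)) mulr_natl mulr2n.
apply: lerD; rewrite ler_wpM2l ?expR_ge0 //.
  by apply: class_dev_mgf; rewrite ger0_norm.
by rewrite -[l ^+ 2]sqrrN; apply: class_dev_mgf; rewrite normrN ger0_norm.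
Qed.

Lemma count_tail_le eps l : (0 < N)%N -> 0 <= l -> l <= 1 / 2 ->
  PN gamma N (fun G => eps < `|(count_balls N L k G g o)%:R / N%:R - mu|) <=
  m%:R * (2 * (expR (- (l * ((N%:R * eps - 2 * K%:R) / m%:R))) *
               expR (l ^+ 2 / 2 * (N %/ m).+1%:R))).
Proof.
move=> N0 l0 l_le; set s := (N%:R * eps - 2 * K%:R) / m%:R.
rewrite PN_bern_expect.
apply: (@le_trans _ _ (expect (fun E => \sum_(r : 'I_m)
    (expR (l * class_dev r E - l * s) + expR (- l * class_dev r E - l * s))))).
  apply: (ler_bern_expect (@pedge01 _ gamma N)) => E _.
  have terms_ge0 r : 0 <= expR (l * class_dev r E - l * s) + expR (- l * class_dev r E - l * s).
    by rewrite addr_ge0 ?expR_ge0.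
  case: asboolP => [dev|_] /=; last by apply: sumr_ge0 => r _.
  have [r sr] := count_dev_class_dev N0 dev.
  rewrite (bigD1 r) //=; apply: le_trans (expR_two_sided_ge1 l0 sr) _.
  by rewrite lerDl; apply: sumr_ge0 => r' _.
rewrite bern_expect_sum; apply: le_trans (ler_sum _ (fun r _ => @class_tail_le r l s l0 l_le)) _.
by rewrite big_const_ord iter_addr_0 [X in _ <= X]mulr_natl.
Qed.
End ResidueClasses.

Lemma tail_bound_numeric (R : realType) (n K eps c : R) :
  1 <= K -> 0 < eps -> eps < 1 -> 0 <= n -> 0 <= c -> c <= n / (2 * K + 1) + 1 ->
  8 * (2 * K + 1) * (8 * K + 2) * (2 * K + 3) <= eps ^+ 2 * n ->
  (2 * K + 1) * (2 * (expR (- (eps / 2 * ((n * eps - 2 * K) / (2 * K + 1)))) *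
                      expR ((eps / 2) ^+ 2 / 2 * c)))
  < 2 * expR (- (eps ^+ 2 * n / (8 * K + 2))).
Proof.
set M := 2 * K + 1; set D := 8 * K + 2 => K1 eps0 eps1 n0 c0 cn large.
have M0 : 0 < M by rewrite /M; lra.
have D0 : 0 < D by rewrite /D; lra.
set a := n / M; have aM : a * M = n by rewrite /a mulfVK // gt_eqF.
set b := eps ^+ 2 * n / D; have bD : b * D = eps ^+ 2 * n by rewrite /b mulfVK // gt_eqF.
set q := 2 * K / M; have qM : q * M = 2 * K by rewrite /q mulfVK // gt_eqF.
have q1 : q <= 1 by rewrite /q ler_pdivrMr // /M; lra.
have -> : (n * eps - 2 * K) / M = eps * a - q by rewrite /a /q; field; rewrite gt_eqF.
rewrite -expRD; set X := _ + _.
have X_le : X <= - (eps ^+ 2 * a / 2) + eps / 2 + eps ^+ 2 / 8 * (a + 1).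
  have c_term : (eps / 2) ^+ 2 / 2 * c <= eps ^+ 2 / 8 * (a + 1).
    rewrite (_ : (eps / 2) ^+ 2 / 2 = eps ^+ 2 / 8); last by field.
    by rewrite ler_wpM2l // divr_ge0 ?sqr_ge0.
  have lin_term : - (eps / 2 * (eps * a - q)) <= - (eps ^+ 2 * a / 2) + eps / 2.
    rewrite (_ : - _ = - (eps ^+ 2 * a / 2) + eps / 2 * q); last by rewrite expr2; field.
    by rewrite lerD2l ger_pMr //; lra.
  by rewrite /X; lra.
have b_le : b + (M + 2) <= 3 * eps ^+ 2 * a / 8.
  rewrite -(ler_pM2r (_ : 0 < 8 * M * D)); last by rewrite !mulr_gt0.
  rewrite (_ : (b + (M + 2)) * (8 * M * D) = 8 * M * (b * D) + 8 * M * D * (M + 2)); last by ring.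
  rewrite (_ : 3 * eps ^+ 2 * a / 8 * (8 * M * D) = 3 * D * eps ^+ 2 * (a * M)); last by field.
  rewrite bD aM; have : 0 <= eps ^+ 2 * n by rewrite mulr_ge0 ?sqr_ge0.
  rewrite /M /D in large *; nra.
have M_lt : M < expR M by have := expR_ge1Dx M; lra.
rewrite mulrCA ltr_pM2l //; apply: lt_le_trans (_ : expR M * expR X <= _).
  by rewrite ltr_pM2r ?expR_gt0.
have e2 : eps ^+ 2 <= 1 by rewrite expr_le1 ?ltW.
by rewrite -expRD ler_expR; nra.
Qed.

Lemma exists_nat_ge_mulr (R : archiRealFieldType) (c a : R) : 0 < a ->
  exists N1 : nat, forall N, (N1 <= N)%N -> c <= a * N%:R.
Proof.
move=> a0; pose x := Num.max 0 (c / a).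
have x0 : 0 <= x by rewrite le_max lexx.
exists (Num.Def.archi_bound x) => N N1N; rewrite mulrC -ler_pdivrMr //.
have : c / a <= x by rewrite le_max lexx orbT.
by move/le_trans; apply; apply/ltW/(lt_le_trans (archi_boundP x0)); rewrite ler_nat.
Qed.

Lemma count_frac01 (R : realType) (N L k : nat) (G g : zgraph) (o : int) :
  0 <= ((count_balls N L k G g o)%:R / N%:R : R) <= 1.
Proof.
have [->|N0] := posnP N; first by rewrite invr0 mulr0 lexx ler01.
rewrite divr_ge0 //= ler_pdivrMr ?ltr0n // mul1r ler_nat.
by apply: leq_trans (max_card _) _; rewrite card_ord.
Qed.

Lemma PN_count_dev_eq0 (R : realType) (gamma : R) (N L k : nat) (g : zgraph) (o : int)
    (mu eps : R) :
  0 <= mu <= 1 -> 1 <= eps ->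
  PN gamma N (fun G => eps < `|(count_balls N L k G g o)%:R / N%:R - mu|) = 0.
Proof.
move=> /andP[mu0 mu1] eps1.
rewrite PN_bern_expect -[RHS](bern_expect_cst (@pedge _ gamma N) (cand N)).
apply: eq_bern_expect => E _; rewrite asboolF //; apply/negP; rewrite -leNgt.
have /andP[c0 c1] := count_frac01 R N L k (GN E) g o.
by rewrite ler_norml; apply/andP; split; lra.
Qed.

Local Open Scope classical_set_scope.
Local Open Scope ring_scope.

Theorem lemma9 (R : realType) (gamma : R) (k L : nat) (g : zgraph) (o : int)
    (eps : R) (d : measure_display) (Omega : measurableType d)
    (P : probability Omega R) (xi : int -> int -> Omega -> bool) :
  0 < gamma -> (0 < k)%N -> (0 < L)%N -> is_graph g -> gV g o -> 0 < eps ->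
  is_Pgamma gamma P xi ->
  let mu := fine (P [set w | rooted_iso (tball L (Gz xi w) 0 k) 0 g o]) in
  exists N0 : nat, forall N : nat, (N0 <= N)%N ->
    PN gamma N (fun G => `| (count_balls N L k G g o)%:R / N%:R - mu | > eps)
    < 2 * expR (- (eps ^+ 2 * N%:R / (8 * k%:R * L%:R + 2))).
Proof.
move=> _ k0 L0 _ _ eps0 Pg mu; set K := (k * L)%N; set m := (2 * K).+1.
have [N1 N1P] := exists_nat_ge_mulr
  (8 * (2 * K%:R + 1) * (8 * K%:R + 2) * (2 * K%:R + 3)) (exprn_gt0 2 eps0).
exists (maxn m N1) => N; rewrite geq_max => /andP[mN N1N].
have N0 : (0 < N)%N by rewrite /m in mN; lia.
have interior (i : 'I_N) : (K <= i)%N -> (i + K < N)%N -> ball_mean gamma k L g o i = mu.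
  by move=> iK iKN; rewrite /mu (ball_prob_interior Pg g o iK iKN).
have mu01 : 0 <= mu <= 1.
  have KN : (K < N)%N by rewrite /m in mN; lia.
  rewrite -(interior (Ordinal KN)) /=; [apply: bern_expect_indicator01; exact: pedge01 | |]; lia.
have [eps1|eps_lt1] := leP 1 eps; first by rewrite PN_count_dev_eq0 // mulr_gt0 ?expR_gt0.
apply: le_lt_trans (count_tail_le interior mu01 eps N0 (_ : 0 <= eps / 2) _) _; try lra.
have m_R : m%:R = 2 * K%:R + 1 :> R by rewrite /m -addn1 natrD natrM.
have D_R : 8 * k%:R * L%:R + 2 = 8 * K%:R + 2 :> R by rewrite /K natrM mulrA.
rewrite -/K -/m m_R D_R; apply: tail_bound_numeric => //.
- by rewrite ler1n muln_gt0 k0 L0.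
- by rewrite -m_R -natr1 lerD2r ler_pdivlMr ?ltr0n // -natrM ler_nat leq_divM.
- exact: N1P.
Qed.
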